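(* Let $L$ be a loss function satisfying axioms (A1)–(A7) listed in the context. Then there is a real constant $K$ such that for every finite variable set $V$, every state $\mathbf x\in\{0,1\}^V$ and every $\mathbf p\in[0,1]^V$, $$L(\mathbf x,\mathbf p)=-K\Big(\sum_{i:\,\mathbf x\models X_i}\log\mathbf p_i+\sum_{i:\,\mathbf x\models\neg X_i}\log(1-\mathbf p_i)\Big).$$
   Context: For a finite set $V$ of Boolean variables, a sentence over $V$ is a propositional formula built from variables in $V$; $\mathit{true}$ is the constant true sentence. A state $\mathbf x\in\{0,1\}^V$ is identified both with the sentence conjoining the literals it makes true and with a vector in $[0,1]^V$. A loss function $L$ assigns to every $\mathbf p\in[0,1]^V$ and every sentence $\alpha$ with variables in $V$ a value $L(\alpha,\mathbf p)\in\mathbb R\cup\{+\infty\}$; $-\log 0=+\infty$. $\alpha\models\beta$ means every state satisfying $\alpha$ satisfies $\beta$. For disjoint $X,Y$, $[\mathbf p\,\mathbf q]$ is the concatenation of $\mathbf p\in[0,1]^X$, $\mathbf q\in[0,1]^Y$. (A1) Truth: $L(\mathit{true},\mathbf p)=0$ for all $\mathbf p$. (A2) Additive independence: for $\alpha$ over $X$, $\beta$ over $Y$, $X\cap Y=\emptyset$: $L(\alpha\wedge\beta,[\mathbf p\,\mathbf q])=L(\alpha,\mathbf p)+L(\beta,\mathbf q)$. (A3) Monotonicity: $\alpha\models\beta$ implies $L(\alpha,\mathbf p)\ge L(\beta,\mathbf p)$. (A4) Identity: $L(\mathbf x,\mathbf x)=0$ for every state $\mathbf x$. (A5) Label-literal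 correspondence: for each variable $X$ there are real constants $K_X,K'_X$ with $L(X,p)=-K_X\log p$ and $L(\neg X,p)=-K'_X\log(1-p)$ for all $p\in[0,1]$ (vectors over $\{X\}$). (A6) Value symmetry: $L(\alpha,\mathbf p)=L(\bar\alpha,\mathbf 1-\mathbf p)$, where $\bar\alpha$ replaces each variable by its negation. (A7) Variable symmetry: for a permutation $\pi$ of the variable set of $\mathbf p$, $L(\alpha,\mathbf p)=L(\pi(\alpha),\pi(\mathbf p))$. *)

From HB Require Import structures.
From mathcomp Require Import all_boot all_order all_algebra.
From mathcomp Require Import finmap fingroup perm.
From mathcomp Require Import all_classical all_reals all_analysis.

Set Implicit Arguments.
Unset Strict Implicit.
Unset Printing Implicit Defensive.

Import Order.TTheory GRing.Theory Num.Theory.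
Local Open Scope ring_scope.
Local Open Scope fset_scope.

Inductive form : Type :=
  | FTrue
  | FFalse
  | FVar of nat
  | FNot of form
  | FAnd of form & form
  | FOr of form & form
  | FImp of form & form.

Fixpoint vars (a : form) : seq nat :=
  match a with
  | FTrue | FFalse => [::]
  | FVar n => [:: n]
  | FNot b => vars b
  | FAnd b c | FOr b c | FImp b c => vars b ++ vars c
  end.

Definition over (V : {fset nat}) (a : form) : Prop := {subset vars a <= V}.

Fixpoint eval (s : nat -> bool) (a : form) : bool :=
  match a with
  | FTrue => true
  | FFalse => false
  | FVar n => s n
  | FNot b => ~~ eval s b
  | FAnd b c => eval s b && eval s c
  | FOr b c => eval s b || eval s c
  | FImp b c => eval s b ==> eval s c
  end.

Definition entails (a b : form) : Prop := forall s : nat -> bool, eval s a -> eval s b.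

Fixpoint negvars (a : form) : form :=
  match a with
  | FTrue => FTrue
  | FFalse => FFalse
  | FVar n => FNot (FVar n)
  | FNot b => FNot (negvars b)
  | FAnd b c => FAnd (negvars b) (negvars c)
  | FOr b c => FOr (negvars b) (negvars c)
  | FImp b c => FImp (negvars b) (negvars c)
  end.

Fixpoint rename (f : nat -> nat) (a : form) : form :=
  match a with
  | FTrue => FTrue
  | FFalse => FFalse
  | FVar n => FVar (f n)
  | FNot b => FNot (rename f b)
  | FAnd b c => FAnd (rename f b) (rename f c)
  | FOr b c => FOr (rename f b) (rename f c)
  | FImp b c => FImp (rename f b) (rename f c)
  end.

Section Vectors.
Variable R : realType.

Definition lossfun := forall V : {fset nat}, (V -> R) -> form -> \bar R.

Definition in01 (V : {fset nat}) (p : V -> R) : Prop :=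
  forall i : V, 0 <= p i <= 1.

Definition ext (V : {fset nat}) (p : V -> R) (n : nat) : R :=
  match (insub n : option V) with Some x => p x | None => 0 end.

Definition concat (X Y : {fset nat}) (p : X -> R) (q : Y -> R) : (X `|` Y) -> R :=
  fun z => if val z \in X then ext p (val z) else ext q (val z).

(* extension of a state over V to all variables (value outside V irrelevant) *)
Definition extb (V : {fset nat}) (x : V -> bool) (n : nat) : bool :=
  match (insub n : option V) with Some y => x y | None => false end.

(* a state x in {0,1}^V as a sentence: the conjunction of the literals it makes true *)
Definition state_form (V : {fset nat}) (x : V -> bool) : form :=
  foldr (fun n acc => FAnd (if extb x n then FVar n else FNot (FVar n)) acc)
        FTrue (enum_fset V).

Definition state_vec (V : {fset nat}) (x : V -> bool) : V -> R :=
  fun i => (x i)%:R.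

Definition neglog (p : R) : \bar R := if p == 0 then +oo%E else (- ln p)%:E.

Definition perm_var (V : {fset nat}) (pi : {perm V}) (n : nat) : nat :=
  match (insub n : option V) with Some y => val (pi y) | None => n end.

(* pi(p): the vector whose pi(i)-th entry is p_i *)
Definition perm_vec (V : {fset nat}) (pi : {perm V}) (p : V -> R) : V -> R :=
  fun j => p ((pi^-1)%g j).

(* L takes values in R u {+oo} *)
Definition Ax0 (L : lossfun) : Prop :=
  forall (V : {fset nat}) (p : V -> R) a, in01 p -> over V a -> L V p a != -oo%E.

Definition A1 (L : lossfun) : Prop :=
  forall (V : {fset nat}) (p : V -> R), in01 p -> L V p FTrue = 0%E.

Definition A2 (L : lossfun) : Prop :=
  forall (X Y : {fset nat}) (p : X -> R) (q : Y -> R) a b,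
    [disjoint X & Y] -> in01 p -> in01 q -> over X a -> over Y b ->
    L (X `|` Y) (concat p q) (FAnd a b) = (L X p a + L Y q b)%E.

Definition A3 (L : lossfun) : Prop :=
  forall (V : {fset nat}) (p : V -> R) a b, in01 p -> over V a -> over V b ->
    entails a b -> (L V p b <= L V p a)%E.

Definition A4 (L : lossfun) : Prop :=
  forall (V : {fset nat}) (x : V -> bool), L V (state_vec x) (state_form x) = 0%E.

Definition A5 (L : lossfun) : Prop :=
  forall X : nat, exists K K' : R, forall pv : R, 0 <= pv <= 1 ->
    L [fset X] (fun _ => pv) (FVar X) = (K%:E * neglog pv)%E /\
    L [fset X] (fun _ => pv) (FNot (FVar X)) = (K'%:E * neglog (1 - pv))%E.

Definition A6 (L : lossfun) : Prop :=
  forall (V : {fset nat}) (p : V -> R) a, in01 p -> over V a ->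
    L V p a = L V (fun i => 1 - p i) (negvars a).

Definition A7 (L : lossfun) : Prop :=
  forall (V : {fset nat}) (p : V -> R) (pi : {perm V}) a, in01 p -> over V a ->
    L V p a = L V (perm_vec pi p) (rename (perm_var pi) a).

End Vectors.

From Pilot Require Import Defs.
From HB Require Import structures.
From mathcomp Require Import all_boot all_order all_algebra.
From mathcomp Require Import finmap fingroup perm.
From mathcomp Require Import all_classical all_reals all_analysis.

(* At p = 1/2 both literals of a variable cost K * log 2 with log 2 <> 0, so
   the constants of (A5) can be read off there.  Value symmetry turns the loss
   of the positive literal into that of the negative one, so K_X = K'_X.
   Padding X with a second variable Y (additivity and truth) and swapping the
   two (variable symmetry) gives K_X = K_Y.  With a single constant K,
   additivity then splits the loss of a state into the sum of the losses of
   its literals. *)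

Import Order.TTheory GRing.Theory Num.Theory.
Local Open Scope ring_scope.
Local Open Scope fset_scope.

Section Losses.
Context {R : realType}.

Lemma ext_val (V : {fset nat}) (p : V -> R) (i : V) : ext p (val i) = p i.
Proof. by rewrite /ext valK. Qed.

Lemma ext_in01 {V : {fset nat}} {p : V -> R} : in01 p -> forall n, 0 <= ext p n <= 1.
Proof. by rewrite /ext => p01 n; case: insubP => [i _ _|_]; rewrite ?lexx ?ler01. Qed.

Lemma concat_val (X Y : {fset nat}) (f : nat -> R) :
  concat (fun i : X => f (val i)) (fun i : Y => f (val i)) = (fun i => f (val i)).
Proof.
apply: funext => z; rewrite /concat /ext; case: ifP => zX; first by rewrite insubT.
have zY : val z \in Y by move: (fsvalP z); rewrite in_fsetU zX.
by rewrite insubT.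
Qed.

Lemma onem_in01 {p : R} : 0 <= p <= 1 -> 0 <= 1 - p <= 1.
Proof. by case/andP=> p0 p1; rewrite subr_ge0 lerBlDr lerDl p0 p1. Qed.

Lemma half_in01 : 0 <= (2^-1 : R) <= 1.
Proof. by rewrite invr_ge0 ler0n invf_le1 // ler1n. Qed.

Lemma neglog_ge0 (p : R) : 0 <= p <= 1 -> (0 <= neglog p)%E.
Proof.
by case/andP=> _ p1; rewrite /neglog; case: ifP => // _; rewrite lee_fin oppr_ge0 ln_le0.
Qed.

Lemma neglog_half : neglog (2^-1 : R) = (ln 2)%:E.
Proof. by rewrite /neglog invr_eq0 pnatr_eq0 /= lnV ?opprK // posrE ltr0n. Qed.

Lemma scale_neglog_half_inj (K1 K2 : R) :
  (K1%:E * neglog 2^-1 = K2%:E * neglog 2^-1)%E -> K1 = K2.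
Proof.
have ln2_neq0 : ln (2 : R) != 0 by rewrite gt_eqF // ln_gt0 // ltr1n.
by rewrite neglog_half -!EFinM => -[] /(mulIf ln2_neq0).
Qed.

Lemma over_var n : Defs.over [fset n] (FVar n).
Proof. by move=> x; rewrite inE => /eqP ->; rewrite in_fset1. Qed.

Definition literal_loss (L : lossfun R) n (K K' : R) :=
  forall pv : R, 0 <= pv <= 1 ->
    L [fset n] (fun _ => pv) (FVar n) = (K%:E * neglog pv)%E /\
    L [fset n] (fun _ => pv) (FNot (FVar n)) = (K'%:E * neglog (1 - pv))%E.

Definition conj_literals (b : nat -> bool) (s : seq nat) : Defs.form :=
  foldr (fun n acc => FAnd (if b n then FVar n else FNot (FVar n)) acc) FTrue s.

Lemma over_conj_literals b {s} {W : {fset nat}} :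
  W =i s -> Defs.over W (conj_literals b s).
Proof.
move=> Ws x; rewrite Ws; elim: s {Ws} => [//|n s IH] /=.
by rewrite mem_cat in_cons; case: (b n); rewrite /= ?mem_seq1 => /orP[->|/IH ->];
  rewrite ?orbT.
Qed.

Section LossFunction.
Context {L : lossfun R}.
Hypothesis L_true : A1 L.
Hypothesis L_additive : A2 L.
Hypothesis L_lit : A5 L.
Hypothesis L_neg : A6 L.
Hypothesis L_perm : A7 L.

Lemma loss_and_true (X Y : {fset nat}) (p : X -> R) (q : Y -> R) a :
  [disjoint X & Y] -> in01 p -> in01 q -> Defs.over X a ->
  L (X `|` Y) (concat p q) (FAnd a FTrue) = L X p a.
Proof.
by move=> XY p01 q01 Xa; rewrite L_additive // L_true // adde0.
Qed.

Lemma loss_var_cst_indep (h : R) n m : 0 <= h <= 1 ->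
  L [fset n] (fun _ => h) (FVar n) = L [fset m] (fun _ => h) (FVar m).
Proof.
move=> h01; have [-> //|nm] := eqVneq n m.
have h01V (V : {fset nat}) : in01 (fun _ : V => h) by [].
have pad k l : k != l -> L [fset k] (fun _ => h) (FVar k) =
    L ([fset k] `|` [fset l]) (fun _ => h) (FAnd (FVar k) FTrue).
  move=> kl; rewrite -(concat_val _ _ (fun _ => h)) loss_and_true //.
  - by rewrite fdisjoint1X in_fset1.
  - exact: over_var.
have nV : n \in [fset n] `|` [fset m] by rewrite !inE eqxx.
have mV : m \in [fset n] `|` [fset m] by rewrite !inE eqxx orbT.
have swap_nm : perm_var (tperm [` nV] [` mV]) n = m.
  by rewrite /perm_var insubT (_ : Sub n nV = [` nV]) // tpermL.
rewrite (pad n m) // (L_perm _ _ (tperm [` nV] [` mV])) //=; last first.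
  by move=> x; rewrite inE => /eqP ->.
by rewrite swap_nm /perm_vec /= fsetUC -(pad m n) // eq_sym.
Qed.

Lemma literal_loss_uniform : exists K, forall n, literal_loss L n K K.
Proof.
have [K [K0' lit0]] := L_lit 0%N.
exists K => n; have [Kn [Kn' litn]] := L_lit n.
have [posn _] := litn _ half_in01; have [pos0 _] := lit0 _ half_in01.
have [_ negn] := litn _ (onem_in01 half_in01); rewrite subKr in negn.
have KnK : Kn = K.
  by apply: scale_neglog_half_inj; rewrite -posn -pos0; exact: loss_var_cst_indep half_in01.
have Kn'Kn : Kn' = Kn.
  apply: scale_neglog_half_inj; rewrite -negn -posn.
  by rewrite (L_neg _ _ _ (fun _ => half_in01) (over_var n)).
by rewrite -KnK -{2}Kn'Kn.
Qed.

(* W is any variable set enumerated by s, so the induction hypothesis applies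
   to the tail of s. *)
Lemma loss_conj_literals {K : R} (b : nat -> bool) {f : nat -> R} :
  (forall n, literal_loss L n K K) -> (forall n, 0 <= f n <= 1) ->
  forall s, uniq s -> forall W : {fset nat}, W =i s ->
  L W (fun i => f (val i)) (conj_literals b s) =
    (K%:E * (\sum_(n <- s | b n) neglog (f n)
             + \sum_(n <- s | ~~ b n) neglog (1 - f n)))%E.
Proof.
move=> lit f01; have f01V (V : {fset nat}) : in01 (fun i : V => f (val i)) by [].
elim=> [|n s IH] /= uniq_s W Ws.
  have -> : W = fset0 by apply/fsetP => x; rewrite Ws.
  by rewrite L_true // !big_nil adde0 mule0.
case/andP: uniq_s => ns us; set W' := seq_fset tt s.
have W'E : W' =i s by exact: seq_fsetE.
have -> : W = [fset n] `|` W'.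
  by apply/fsetP => x; rewrite Ws in_fsetU in_fset1 W'E in_cons.
have n_over : Defs.over [fset n] (if b n then FVar n else FNot (FVar n)).
  by case: (b n); apply: over_var.
have W'_over := over_conj_literals b W'E.
have nW' : [disjoint [fset n] & W'] by rewrite fdisjoint1X W'E.
rewrite -concat_val L_additive //.
have -> : (fun i : [fset n] => f (val i)) = (fun _ => f n).
  by apply: funext => -[y] /=; rewrite in_fset1 => /eqP ->.
have [posn negn] := lit n _ (f01 n).
have pos_ge0 t : (0 <= neglog (f t))%E by exact/neglog_ge0.
have neg_ge0 t : (0 <= neglog (1 - f t))%E by exact/neglog_ge0/onem_in01.
rewrite IH // !big_cons; case: (b n) => /=; rewrite ?posn ?negn.
all: rewrite -ge0_muleDr ?adde_ge0 ?sume_ge0 //.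
- by rewrite addeA.
- by rewrite addeCA.
Qed.

End LossFunction.

End Losses.

Theorem lemma1 (R : realType) (L : lossfun R) :
  Ax0 L -> A1 L -> A2 L -> A3 L -> A4 L -> A5 L -> A6 L -> A7 L ->
  exists K : R, forall (V : {fset nat}) (x : V -> bool) (p : V -> R),
    in01 p ->
    L V p (state_form x) =
      (K%:E * (\sum_(i : V | x i) neglog (p i)
               + \sum_(i : V | ~~ x i) neglog (1 - p i)))%E.
Proof.
move=> _ L_true L_additive _ _ L_lit L_neg L_perm.
have [K lit] := literal_loss_uniform L_true L_additive L_lit L_neg L_perm.
exists K => V x p p01.
have -> : p = (fun i => ext p (val i)) by apply: funext => i; rewrite ext_val.
have := loss_conj_literals L_true L_additive (extb x) lit (ext_in01 p01)
  _ (fset_uniq V) V (fun _ => erefl).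
rewrite /conj_literals => ->.
rewrite !big_seq_fsetE /=.
by congr (_ * (_ + _))%E; apply: eq_bigl => i; rewrite /extb valK.
Qed.
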